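(* Let $a,b\in\mathbb{Q}$ be such that $g(x)=x^4+ax^2+b$ is irreducible over $\mathbb{Q}$, and let $\theta$ be a root of $g(x)$. Then for every $r\in\mathbb{Q}\setminus\mathbb{Q}^2$, we have $r\in\mathbb{Q}(\theta)^2$ if and only if at least one of $r(a^2-4b)$, $r(-a+2\sqrt{b})$, $r(-a-2\sqrt{b})$ lies in $\mathbb{Q}^2$.
   Context: For a field $K$, $K^2$ denotes the set of squares in $K$; $\mathbb{Q}^2$ is the set of rational squares. $\sqrt{b}$ denotes a fixed complex square root of $b$. *)

From HB Require Import structures.
From mathcomp Require Import all_boot all_order all_algebra all_field.
Set Implicit Arguments. Unset Strict Implicit. Unset Printing Implicit Defensive.
Import Order.TTheory GRing.Theory Num.Theory.
Local Open Scope ring_scope.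

Definition quartic (a b : rat) : {poly rat} := 'X^4 + a%:P * 'X^2 + b%:P.

(* Q(theta) inside algC: the field generated by theta over Q, i.e. all
   quotients p(theta)/q(theta) with p, q rational polynomials, q(theta) <> 0. *)
Definition in_Qadj (theta x : algC) : Prop :=
  exists p q : {poly rat},
      (map_poly ratr q).[theta] != 0 /\
      x = (map_poly ratr p).[theta] / (map_poly ratr q).[theta].

Definition square_in_Qadj (theta x : algC) : Prop :=
  exists y, in_Qadj theta y /\ x = y ^+ 2.

Definition in_rat_squares (x : algC) : Prop :=
  exists q : rat, x = ratr (q ^+ 2).

From HB Require Import structures.
From mathcomp Require Import all_boot all_order all_algebra all_field.
From mathcomp Require Import ring.

(* Put phi = theta^2 and write y in Q(theta) as y = u + theta v with u, v in Q(phi).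
   Then y^2 = (u^2 + phi v^2) + 2 theta u v, so y^2 = r forces u v = 0.  If v = 0, then
   u lies in Q(phi) = Q(sqrt(a^2 - 4b)) and u^2 = r is rational but not a rational square,
   so u is a rational multiple of sqrt(a^2 - 4b) and r (a^2 - 4b) is a rational square.
   If u = 0, then r = phi v^2, which forces sqrt b to be rational and r (-a + 2 sqrt b) to
   be a square for one choice of sign.  Conversely (2 theta^2 + a)^2 = a^2 - 4b and
   (theta^2 + c)^2 = (-a + 2c) theta^2 whenever c^2 = b, which gives explicit square roots
   of r in Q(theta). *)

Import Order.TTheory GRing.Theory Num.Theory.
Local Open Scope ring_scope.

Section RootOfIrreducible.
Context {F L : fieldType} {f : {rmorphism F -> L}} {p : {poly F}} {x : L}.
Hypotheses (p_irr : irreducible_poly p) (px0 : root (map_poly f p) x).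

Lemma irredp_dvdp_root (h : {poly F}) : root (map_poly f h) x -> p %| h.
Proof.
move=> hx0; apply/negPn; rewrite -irreducible_poly_coprime //.
apply/negP => /Bezout_eq1_coprimepP [[u v] /= /(congr1 (fun q => (map_poly f q).[x]))].
rewrite !rmorphD !rmorphM rmorph1 /= !hornerE (eqP px0) (eqP hx0) !mulr0 addr0.
by move/eqP; rewrite eq_sym oner_eq0.
Qed.

Lemma root_irredp_small (h : {poly F}) :
  (size h < size p)%N -> root (map_poly f h) x -> h = 0.
Proof.
move=> sh /irredp_dvdp_root; apply: contraTeq => h_neq0.
by apply/negP => /(dvdp_leq h_neq0) /(leq_trans sh); rewrite ltnn.
Qed.

Lemma horner_map_modp (h : {poly F}) : (map_poly f (h %% p)).[x] = (map_poly f h).[x].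
Proof.
by rewrite [in RHS](divp_eq h p) rmorphD rmorphM /= hornerD hornerM (eqP px0) mulr0 add0r.
Qed.

Lemma horner_frac_reduced (u v : {poly F}) : (map_poly f v).[x] != 0 ->
  exists2 w : {poly F}, (size w < size p)%N &
    (map_poly f u).[x] / (map_poly f v).[x] = (map_poly f w).[x].
Proof.
move=> vx_neq0; have : coprimep p v.
  rewrite irreducible_poly_coprime //; apply: contra vx_neq0 => /dvdpP [k ->].
  by rewrite rmorphM hornerM (eqP px0) mulr0.
move/Bezout_eq1_coprimepP => [[s t] /= /(congr1 (fun q => (map_poly f q).[x]))].
rewrite !rmorphD !rmorphM rmorph1 /= !hornerE (eqP px0) mulr0 add0r => tv1.
exists ((u * t) %% p); first by rewrite ltn_modp irredp_neq0.
rewrite horner_map_modp rmorphM hornerM; apply: (mulIf vx_neq0).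
by rewrite divfK // -mulrA tv1 mulr1.
Qed.
End RootOfIrreducible.

Lemma size_quartic a b : size (quartic a b) = 5%N.
Proof.
rewrite /quartic -addrA size_polyDl size_polyXn //.
rewrite (leq_ltn_trans (size_polyD _ _)) // gtn_max mul_polyC size_polyC.
by rewrite (leq_ltn_trans (size_scale_leq _ _)) ?size_polyXn // (leq_ltn_trans (leq_b1 _)).
Qed.

Lemma quartic_split_not_irreducible s t :
  ~ irreducible_poly (quartic (s + t) (s * t)).
Proof.
have -> : quartic (s + t) (s * t) = ('X^2 + s%:P) * ('X^2 + t%:P).
  by rewrite /quartic polyCD polyCM; ring.
move=> [_ /(_ ('X^2 + s%:P) _ (dvdp_mulr _ (dvdpp _)))]; rewrite size_XnaddC // => /(_ isT).
by move/eqp_size/eqP; rewrite size_mul ?monic_neq0 ?monicXnaddC // !size_XnaddC.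
Qed.

Section IrreducibleQuartic.
Context {a b : rat}.
Hypothesis g_irr : irreducible_poly (quartic a b).

Lemma irreducible_quartic_discr s : s ^+ 2 != a ^+ 2 - 4 * b.
Proof.
apply/eqP => sE; apply: (@quartic_split_not_irreducible ((a - s) / 2) ((a + s) / 2)).
have -> : (a - s) / 2 + (a + s) / 2 = a by field.
have -> : (a - s) / 2 * ((a + s) / 2) = (a ^+ 2 - s ^+ 2) / 4 by field.
by rewrite sE (_ : _ / 4 = b) //; field.
Qed.

Lemma irreducible_quartic_b_neq0 : b != 0.
Proof.
apply/eqP => b0; apply: (@quartic_split_not_irreducible a 0).
by rewrite addr0 mulr0 -b0.
Qed.

Lemma irreducible_quartic_sqrt_b {c : rat} : c ^+ 2 = b -> - a + 2 * c != 0.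
Proof.
move=> cE; apply/eqP => ac; apply: (@quartic_split_not_irreducible c c).
have -> : c + c = a by rewrite -[a]addr0 -ac; ring.
by rewrite -expr2 cE.
Qed.
End IrreducibleQuartic.

Section SquareCoordinates.
Context {F : fieldType} {a b r x0 x1 x2 x3 : F}.
Hypotheses (two_neq0 : 2 != 0 :> F)
  (discr_nsq : forall s, s ^+ 2 != a ^+ 2 - 4 * b) (r_nsq : forall q, r != q ^+ 2).
Hypotheses
  (coord0 : x0 ^+ 2 - b * x2 ^+ 2 - 2 * b * x1 * x3 + a * b * x3 ^+ 2 = r)
  (coord1 : x0 * x1 = b * x2 * x3)
  (coord2 : 2 * x0 * x2 - a * x2 ^+ 2 + x1 ^+ 2 - 2 * a * x1 * x3 + (a ^+ 2 - b) * x3 ^+ 2 = 0)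
  (coord3 : x0 * x3 + x1 * x2 = a * x2 * x3).

(* The norm of x1 + x3 phi from Q(phi) to Q, where phi^2 + a phi + b = 0. *)
Let N := x1 ^+ 2 - a * x1 * x3 + b * x3 ^+ 2.

Lemma coords_norm_eq0 : N = 0 -> exists q, r * (a ^+ 2 - 4 * b) = q ^+ 2.
Proof.
move=> N0; have x3_0 : x3 = 0.
  apply/eqP; apply: contraT => x3_neq0.
  rewrite -(negbTE (discr_nsq ((2 * x1 - a * x3) / x3))); apply/eqP.
  transitivity (a ^+ 2 - 4 * b + 4 * N / x3 ^+ 2); first by rewrite /N; field.
  by rewrite N0 mulr0 mul0r addr0.
have x1_0 : x1 = 0 by apply/eqP; rewrite -sqrf_eq0 -N0 /N x3_0; apply/eqP; ring.
have x2_neq0 : x2 != 0.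
  by apply: contraNneq (r_nsq x0) => x2_0; rewrite -coord0 x2_0 x3_0; apply/eqP; ring.
have x0E : x0 = a * x2 / 2.
  have : x2 * (2 * x0 - a * x2) = 0 by rewrite -coord2 x1_0 x3_0; ring.
  move/eqP; rewrite mulf_eq0 (negbTE x2_neq0) subr_eq0 => /eqP <-.
  by field.
by exists (x2 * (a ^+ 2 - 4 * b) / 2); rewrite -coord0 x0E x1_0 x3_0; field.
Qed.

Lemma coords_norm_neq0 : N != 0 -> exists c q, c ^+ 2 = b /\ r * (- a + 2 * c) = q ^+ 2.
Proof.
move=> N_neq0; have x0_0 : x0 = 0.
  apply: (mulIf N_neq0); rewrite mul0r.
  transitivity ((x1 - a * x3) * (x0 * x1 - b * x2 * x3)
                + b * x3 * (x0 * x3 + x1 * x2 - a * x2 * x3)).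
    by rewrite /N; ring.
  by rewrite coord1 coord3 !subrr !mulr0 addr0.
have x2_0 : x2 = 0.
  apply: (mulIf N_neq0); rewrite mul0r.
  transitivity (x1 * (x0 * x3 + x1 * x2 - a * x2 * x3) - x3 * (x0 * x1 - b * x2 * x3)).
    by rewrite /N; ring.
  by rewrite coord1 coord3 !subrr !mulr0 subr0.
have x3_neq0 : x3 != 0.
  apply: contraNneq N_neq0 => x3_0.
  have x1_sq0 : x1 ^+ 2 = 0 by rewrite -coord2 x0_0 x2_0 x3_0; ring.
  by apply/eqP; rewrite /N x3_0 x1_sq0; ring.
have [c x1E] : exists c, x1 = (a - c) * x3 by exists ((a * x3 - x1) / x3); field.
have cE : c ^+ 2 = b.
  have : x3 ^+ 2 * (c ^+ 2 - b) = 0 by rewrite -coord2 x0_0 x2_0 x1E; ring.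
  by move/eqP; rewrite mulf_eq0 expf_eq0 (negbTE x3_neq0) andbF subr_eq0 => /eqP.
exists c, (c * x3 * (2 * c - a)); split=> //.
by rewrite -coord0 x0_0 x2_0 x1E -cE; ring.
Qed.

Lemma square_coords_cases :
  (exists q, r * (a ^+ 2 - 4 * b) = q ^+ 2) \/
  (exists c q, c ^+ 2 = b /\ r * (- a + 2 * c) = q ^+ 2).
Proof.
by have [/coords_norm_eq0|/coords_norm_neq0] := eqVneq N 0; [left | right].
Qed.
End SquareCoordinates.

Section QuarticRoot.
Context {a b : rat} {theta : algC}.
Hypotheses (g_irr : irreducible_poly (quartic a b))
  (g_theta : root (map_poly ratr (quartic a b)) theta).

Lemma quartic_root_eq : theta ^+ 4 + ratr a * theta ^+ 2 + ratr b = 0.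
Proof.
move: g_theta; rewrite /root /quartic !rmorphD rmorphM /= !map_polyC !map_polyXn.
by rewrite !hornerE => /eqP.
Qed.

Lemma cubic_root_eq0 {c0 c1 c2 c3 : rat} :
  ratr c0 + ratr c1 * theta + ratr c2 * theta ^+ 2 + ratr c3 * theta ^+ 3 = 0 ->
  [/\ c0 = 0, c1 = 0, c2 = 0 & c3 = 0].
Proof.
move=> h_theta; set h := Poly [:: c0; c1; c2; c3].
have : h = 0.
  apply: (root_irredp_small g_irr g_theta).
    by rewrite size_quartic (leq_ltn_trans (size_Poly _)).
  rewrite /root (horner_coef_wide _ (n := 4)) ?size_map_poly ?size_Poly //.
  by rewrite !big_ord_recr big_ord0 /= !coef_map !coef_Poly /= expr0 expr1 mulr1 add0r h_theta.
by move=> h0; split; [move: (congr1 (coefp 0) h0) | move: (congr1 (coefp 1) h0)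
  | move: (congr1 (coefp 2) h0) | move: (congr1 (coefp 3) h0)]; rewrite /= coef_Poly coef0.
Qed.

Lemma in_Qadj_cubic y : in_Qadj theta y -> exists c0 c1 c2 c3 : rat,
  y = ratr c0 + ratr c1 * theta + ratr c2 * theta ^+ 2 + ratr c3 * theta ^+ 3.
Proof.
move=> [u [v [v_theta ->]]].
have [w sw ->] := horner_frac_reduced g_irr g_theta u v v_theta.
exists w`_0, w`_1, w`_2, w`_3.
rewrite (horner_coef_wide _ (n := 4)); last by rewrite size_map_poly -ltnS -(size_quartic a b).
by rewrite !big_ord_recr big_ord0 /= !coef_map /= expr0 expr1 mulr1 add0r.
Qed.

Lemma square_in_Qadj_coords r : square_in_Qadj theta (ratr r) ->
  exists x0 x1 x2 x3 : rat,
  [/\ x0 ^+ 2 - b * x2 ^+ 2 - 2 * b * x1 * x3 + a * b * x3 ^+ 2 = r,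
      x0 * x1 = b * x2 * x3,
      2 * x0 * x2 - a * x2 ^+ 2 + x1 ^+ 2 - 2 * a * x1 * x3 + (a ^+ 2 - b) * x3 ^+ 2 = 0 &
      x0 * x3 + x1 * x2 = a * x2 * x3].
Proof.
move=> [_ [/in_Qadj_cubic [x0 [x1 [x2 [x3 ->]]]] r_sq]]; exists x0, x1, x2, x3.
pose y := ratr x0 + ratr x1 * theta + ratr x2 * theta ^+ 2 + ratr x3 * theta ^+ 3.
(* The remainder of y^2 - r modulo the quartic, the quotient being made explicit. *)
have y_sq_reduced :
  ratr (x0 ^+ 2 - b * x2 ^+ 2 - 2 * b * x1 * x3 + a * b * x3 ^+ 2 - r)
  + ratr (2 * (x0 * x1 - b * x2 * x3)) * theta
  + ratr (2 * x0 * x2 - a * x2 ^+ 2 + x1 ^+ 2 - 2 * a * x1 * x3 + (a ^+ 2 - b) * x3 ^+ 2)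
    * theta ^+ 2
  + ratr (2 * (x0 * x3 + x1 * x2 - a * x2 * x3)) * theta ^+ 3 = 0.
  transitivity (y ^+ 2 - ratr r - (ratr x3 ^+ 2 * theta ^+ 2 + 2 * ratr x2 * ratr x3 * theta
     + (ratr x2 ^+ 2 + 2 * ratr x1 * ratr x3 - ratr a * ratr x3 ^+ 2)) *
     (theta ^+ 4 + ratr a * theta ^+ 2 + ratr b)).
    by rewrite /y !(rmorphB, rmorphD, rmorphM, rmorphXn, rmorph_nat); ring.
  by rewrite quartic_root_eq mulr0 subr0 r_sq subrr.
have [c0 /eqP c1 c2 /eqP c3] := cubic_root_eq0 y_sq_reduced.
move: c1 c3; rewrite !mulf_eq0 !pnatr_eq0 !subr_eq0 /= => c1 c3.
by split; [apply: subr0_eq | apply/eqP | | apply/eqP].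
Qed.

Lemma square_in_Qadj_discr r q : r * (a ^+ 2 - 4 * b) = q ^+ 2 ->
  square_in_Qadj theta (ratr r).
Proof.
move=> rq; have d_neq0 : ratr (a ^+ 2 - 4 * b) != 0 :> algC.
  by rewrite fmorph_eq0 eq_sym; have := irreducible_quartic_discr g_irr 0; rewrite expr0n.
have sq_eq : (2 * theta ^+ 2 + ratr a) ^+ 2 = ratr (a ^+ 2 - 4 * b).
  transitivity (ratr (a ^+ 2 - 4 * b) + 4 * (theta ^+ 4 + ratr a * theta ^+ 2 + ratr b)).
    by rewrite !(rmorphB, rmorphM, rmorphXn, rmorph_nat); ring.
  by rewrite quartic_root_eq mulr0 addr0.
have den_neq0 : 2 * theta ^+ 2 + ratr a != 0.
  by apply: contraNneq d_neq0 => den0; rewrite -sq_eq den0 expr0n.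
exists (ratr q / (2 * theta ^+ 2 + ratr a)); split.
  exists q%:P, (2%:P * 'X^2 + a%:P).
  rewrite rmorphD rmorphM /= !map_polyC map_polyXn hornerD hornerM !hornerC hornerXn /=.
  by rewrite (rmorph_nat (@ratr algC)).
by rewrite expr_div_n sq_eq -rmorphXn -rq rmorphM mulfK.
Qed.

Lemma square_in_Qadj_sqrt_b r c q : c ^+ 2 = b -> r * (- a + 2 * c) = q ^+ 2 ->
  square_in_Qadj theta (ratr r).
Proof.
move=> cE rq; have k_neq0 : ratr (- a + 2 * c) != 0 :> algC.
  by rewrite fmorph_eq0 (irreducible_quartic_sqrt_b g_irr cE).
have theta_neq0 : theta != 0.
  apply: contraTneq (irreducible_quartic_b_neq0 g_irr) => theta0.
  move: quartic_root_eq; rewrite theta0 !expr0n /= mulr0 !add0r negbK.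
  by move/eqP; rewrite fmorph_eq0.
have sq_eq : (theta ^+ 2 + ratr c) ^+ 2 = ratr (- a + 2 * c) * theta ^+ 2.
  transitivity (ratr (- a + 2 * c) * theta ^+ 2 + (theta ^+ 4 + ratr a * theta ^+ 2 + ratr b)).
    by rewrite -cE !(rmorphD, rmorphN, rmorphM, rmorphXn, rmorph_nat); ring.
  by rewrite quartic_root_eq addr0.
have den_neq0 : theta ^+ 2 + ratr c != 0.
  apply: contraNneq (mulf_neq0 k_neq0 (expf_neq0 2 theta_neq0)) => den0.
  by rewrite -sq_eq den0 expr0n.
exists (ratr q * theta / (theta ^+ 2 + ratr c)); split.
  exists (q%:P * 'X), ('X^2 + c%:P).
  by rewrite !(rmorphD, rmorphM) /= !map_polyC !map_polyX !hornerE.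
rewrite expr_div_n sq_eq exprMn -rmorphXn -rq rmorphM -mulrA.
by rewrite mulfK // mulf_neq0 ?expf_neq0.
Qed.

Lemma square_in_Qadj_quartic r : ~ (exists q, r = q ^+ 2) ->
  square_in_Qadj theta (ratr r) <->
  (exists q, r * (a ^+ 2 - 4 * b) = q ^+ 2) \/
  (exists c q, c ^+ 2 = b /\ r * (- a + 2 * c) = q ^+ 2).
Proof.
move=> r_nsq; split.
  move/square_in_Qadj_coords => [x0 [x1 [x2 [x3 [E0 E1 E2 E3]]]]].
  apply: (square_coords_cases _ _ _ E0 E1 E2 E3) => // [s|q].
    exact: irreducible_quartic_discr.
  by apply: contra_not_neq r_nsq => ->; exists q.
by case=> [[q] | [c [q []]]]; [exact: square_in_Qadj_discr | exact: square_in_Qadj_sqrt_b].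
Qed.
End QuarticRoot.

Lemma in_rat_squares_ratr (x : rat) : in_rat_squares (ratr x) <-> exists q, x = q ^+ 2.
Proof. by split=> [[q /fmorph_inj]|[q ->]]; exists q. Qed.

Lemma in_rat_squares_rat_sqrt {a b r : rat} {s : algC} : r != 0 -> s ^+ 2 = ratr b ->
  in_rat_squares (ratr r * (- ratr a + 2 * s)) ->
  exists c q, c ^+ 2 = b /\ r * (- a + 2 * c) = q ^+ 2.
Proof.
move=> r_neq0 sE [q rq]; have [c cs] : exists c, ratr c = s.
  exists ((q ^+ 2 / r + a) / 2).
  have r'_neq0 : ratr r != 0 :> algC by rewrite fmorph_eq0.
  transitivity ((ratr r * (- ratr a + 2 * s) / ratr r + ratr a) / 2); last by field.
  by rewrite rq !(rmorphD, rmorphM, rmorphV, rmorph_nat) ?unitfE //; field.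
exists c, q; split; apply: (fmorph_inj (@ratr algC)).
  by rewrite /= -sE -cs rmorphXn.
by rewrite /= -rq -cs !(rmorphD, rmorphN, rmorphM, rmorph_nat).
Qed.

Lemma in_rat_squares_sqrtC (a b r : rat) : r != 0 ->
  in_rat_squares (ratr r * (- ratr a + 2 * sqrtC (ratr b))) \/
  in_rat_squares (ratr r * (- ratr a - 2 * sqrtC (ratr b))) <->
  exists c q, c ^+ 2 = b /\ r * (- a + 2 * c) = q ^+ 2.
Proof.
move=> r_neq0; split.
  case=> sq; first exact: in_rat_squares_rat_sqrt r_neq0 (sqrtCK _) sq.
  by apply: (in_rat_squares_rat_sqrt r_neq0 (s := - sqrtC (ratr b))); rewrite ?sqrrN ?sqrtCK ?mulrN.
move=> [c [q [cE rq]]].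
have : sqrtC (ratr b) ^+ 2 == ratr c ^+ 2 :> algC by rewrite sqrtCK -cE rmorphXn.
rewrite eqf_sqr => /orP[]/eqP ->; [left | right]; exists q;
  by rewrite ?mulrN ?opprK -rq !(rmorphD, rmorphN, rmorphM, rmorph_nat).
Qed.

Theorem lemma3p2 (a b : rat) (theta : algC) :
  irreducible_poly (quartic a b) ->
  root (map_poly ratr (quartic a b)) theta ->
  forall r : rat, ~ (exists q : rat, r = q ^+ 2) ->
    (square_in_Qadj theta (ratr r) <->
       [\/ in_rat_squares (ratr r * ratr (a ^+ 2 - 4 * b)),
           in_rat_squares (ratr r * (- ratr a + 2 * sqrtC (ratr b))) |
           in_rat_squares (ratr r * (- ratr a - 2 * sqrtC (ratr b)))]).
Proof.
move=> g_irr g_theta r r_nsq.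
have r_neq0 : r != 0 by apply: contra_not_neq r_nsq => ->; exists 0; rewrite expr0n.
rewrite (square_in_Qadj_quartic g_irr g_theta r r_nsq) -(in_rat_squares_sqrtC a b r r_neq0).
rewrite -rmorphM; split.
  by case=> [/in_rat_squares_ratr|[]]; [apply: Or31 | apply: Or32 | apply: Or33].
by case=> [/in_rat_squares_ratr|?|?]; [left | right; left | right; right].
Qed.
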